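(* Let $t_0\in\mathbb{Z}$, $b,c:\mathbb{Z}\to[0,\infty)$, $x_0>0$, $y_0>0$, $z_0\ge0$, $N=x_0+y_0+z_0$, $\kappa=\frac{y_0}{x_0}$, and $$g(t)=\frac{b(t)\kappa}{\left[\prod_{i=t_0}^{t}(1+(c-b)(i))\right]+\kappa\,(1+(c-b)(t))}.$$ Consider the discrete system $$x(t+1)=x(t)-\frac{b(t)x(t)y(t+1)}{x(t)+y(t)},\quad y(t+1)=y(t)+\frac{b(t)x(t)y(t+1)}{x(t)+y(t)}-c(t)y(t+1),\quad z(t+1)=z(t)+c(t)y(t+1),$$ with $x(t_0)=x_0$, $y(t_0)=y_0$, $z(t_0)=z_0$. If $1+c(t)-b(t)\neq0$ and $1+g(t)\neq0$ for all $t\in\mathbb{Z}$, then the unique solution is given, for integers $t\ge t_0$, by $$x(t)=x_0\left[\prod_{i=t_0}^{t-1}(1+g(i))\right]^{-1},\qquad y(t)=y_0\left[\prod_{i=t_0}^{t-1}(1+(c-b)(i))(1+g(i))\right]^{-1},$$ $$z(t)=N-\left(x_0+y_0\left[\prod_{i=t_0}^{t-1}(1+(c-b)(i))\right]^{-1}\right)\left[\prod_{i=t_0}^{t-1}(1+g(i))\right]^{-1}.$$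
   Context: An empty product (when $t=t_0$) equals $1$. *)

From HB Require Import structures.
From mathcomp Require Import all_boot all_order all_algebra.
Set Implicit Arguments. Unset Strict Implicit. Unset Printing Implicit Defensive.
Import Order.TTheory GRing.Theory Num.Theory.
Local Open Scope ring_scope.

(* iprod f a b = prod_{i=a}^{b} f i over integers; empty product (= 1) if b < a. *)
Definition iprod (R : comRingType) (f : int -> R) (a b : int) : R :=
  if a <= b then \prod_(k < (`|b - a|%N).+1) f (a + k%:Z) else 1.

Section Model.
Variables (R : realFieldType) (t0 : int) (b c : int -> R) (x0 y0 z0 : R).

Definition kappa : R := y0 / x0.
Definition cmb (t : int) : R := 1 + (c t - b t).

Definition gden (t : int) : R := iprod cmb t0 t + kappa * cmb t.
Definition g (t : int) : R := b t * kappa / gden t.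

Definition onepg (t : int) : R := 1 + g t.

Definition Xsol (t : int) : R := x0 * (iprod onepg t0 (t - 1))^-1.
Definition Ysol (t : int) : R :=
  y0 * (iprod (fun i => cmb i * onepg i) t0 (t - 1))^-1.
Definition Zsol (t : int) : R :=
  (x0 + y0 + z0) - (x0 + y0 * (iprod cmb t0 (t - 1))^-1) * (iprod onepg t0 (t - 1))^-1.

Definition is_solution (x y z : int -> R) : Prop :=
  [/\ x t0 = x0, y t0 = y0, z t0 = z0 &
   forall t : int, t0 <= t ->
     [/\ x (t + 1) = x t - b t * x t * y (t + 1) / (x t + y t),
         y (t + 1) = y t + b t * x t * y (t + 1) / (x t + y t) - c t * y (t + 1) &
         z (t + 1) = z t + c t * y (t + 1)]].
End Model.

From HB Require Import structures.
From mathcomp Require Import all_boot all_order all_algebra.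
From mathcomp Require Import zify ring.
Set Implicit Arguments. Unset Strict Implicit. Unset Printing Implicit Defensive.
Import Order.TTheory GRing.Theory Num.Theory.
Local Open Scope ring_scope.

(* The implicit equation for y(t+1) is linear: y(t+1) * D = y(t) with
   D = 1 + c - b x/(x+y), so a step is uniquely solvable whenever D != 0, and
   x + y + z is conserved.  Along the closed form the ratio y/x equals
   kappa / prod (1 + (c-b)), which turns D into (1 + (c-b)) (1 + g); hence
   x(t+1) = x(t) / (1 + g) and y(t+1) = y(t) / ((1 + (c-b)) (1 + g)). *)

Lemma int_ind_ge (P : int -> Prop) (a : int) :
  P a -> (forall t, a <= t -> P t -> P (t + 1)) -> forall t, a <= t -> P t.
Proof.
move=> Pa PS t le_at; have [n ->] : exists n : nat, t = a + n%:Z.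
  by exists `|t - a|%N; lia.
elim: n => [|n IHn]; first by rewrite addr0.
by rewrite -addn1 PoszD addrA; apply: PS; [lia | exact: IHn].
Qed.

Section IntervalProduct.
Variables (R : comNzRingType) (f : int -> R).

Lemma iprod_pred_id (a : int) : iprod f a (a - 1) = 1.
Proof. by rewrite /iprod ifF //; apply/negbTE; rewrite -ltNge; lia. Qed.

Lemma iprod_recr (a b : int) : a <= b -> iprod f a b = iprod f a (b - 1) * f b.
Proof.
move=> le_ab; have [lt_ab | ge_ab] := ltrP a b.
  rewrite /iprod le_ab ifT; last lia.
  have -> : absz (b - a) = (absz (b - 1 - a)%R).+1 by lia.
  by rewrite big_ord_recr /=; congr (_ * f _); lia.
have -> : b = a by lia.
by rewrite iprod_pred_id mul1r /iprod lexx subrr big_ord1 addr0.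
Qed.

Lemma iprodM (h : int -> R) (a b : int) :
  iprod (fun i => f i * h i) a b = iprod f a b * iprod h a b.
Proof. by rewrite /iprod; case: ifP; rewrite ?big_split ?mulr1. Qed.

End IntervalProduct.

Lemma iprod_neq0 (R : idomainType) (f : int -> R) (a b : int) :
  (forall t, f t != 0) -> iprod f a b != 0.
Proof.
by move=> f_neq0; rewrite /iprod; case: ifP => _; [apply/prodf_neq0 | exact: oner_neq0].
Qed.

Section ImplicitStep.
Variables (R : fieldType) (b c x y : R).

Definition sir_den : R := 1 + c - b * x / (x + y).
Definition sir_gain : R := b * y / ((x + y) * (1 + (c - b))).

Lemma sir_y_eqE (y' : R) : sir_den != 0 ->
  y' = y + b * x * y' / (x + y) - c * y' <-> y' = y / sir_den.
Proof.
move=> den_neq0.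
have defect z : z - (y + b * x * z / (x + y) - c * z) = z * sir_den - y.
  by rewrite /sir_den; ring.
split=> [eq_y' | ->]; last by apply/eqP; rewrite -subr_eq0 defect divfK // subrr.
apply: (mulIf den_neq0); rewrite divfK //; apply/eqP.
by rewrite -subr_eq0 -defect -eq_y' subrr.
Qed.

Lemma sir_sum_step (x' y' : R) :
  x' = x - b * x * y' / (x + y) -> y' = y + b * x * y' / (x + y) - c * y' ->
  x' + y' = x + y - c * y'.
Proof.
move=> eq_x' eq_y'.
transitivity ((x - b * x * y' / (x + y)) + (y + b * x * y' / (x + y) - c * y')).
  by rewrite -eq_x' -eq_y'.
by ring.
Qed.

Hypotheses (xy_neq0 : x + y != 0) (cb_neq0 : 1 + (c - b) != 0).

Lemma sir_denE : sir_den = (1 + (c - b)) * (1 + sir_gain).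
Proof. by rewrite /sir_den /sir_gain; field; rewrite cb_neq0 xy_neq0. Qed.

Lemma sir_x_step : 1 + sir_gain != 0 ->
  x - b * x * (y / sir_den) / (x + y) = x / (1 + sir_gain).
Proof.
move=> gain_neq0; have num_neq0 : (x + y) * (1 + (c - b)) + b * y != 0.
  have -> : (x + y) * (1 + (c - b)) + b * y = (1 + sir_gain) * ((x + y) * (1 + (c - b))).
    by rewrite /sir_gain; field; rewrite cb_neq0 xy_neq0.
  by rewrite !mulf_neq0.
by rewrite sir_denE /sir_gain; field; rewrite cb_neq0 xy_neq0 num_neq0.
Qed.

End ImplicitStep.

Section ClosedForm.
Variables (R : realFieldType) (t0 : int) (b c : int -> R) (x0 y0 z0 : R).
Hypotheses (x0_neq0 : x0 != 0) (cmb_neq0 : forall t, cmb b c t != 0)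
  (gden_neq0 : forall t, gden t0 b c x0 y0 t != 0)
  (onepg_neq0 : forall t, onepg t0 b c x0 y0 t != 0).

Local Notation P t := (iprod (cmb b c) t0 (t - 1)).
Local Notation G t := (iprod (onepg t0 b c x0 y0) t0 (t - 1)).
Local Notation X := (Xsol t0 b c x0 y0).
Local Notation Y := (Ysol t0 b c x0 y0).
Local Notation Z := (Zsol t0 b c x0 y0 z0).

Lemma Ysol_prod t : Y t = y0 / (P t * G t).
Proof. by rewrite /Ysol iprodM. Qed.

Lemma Zsol_conservation t : Z t = x0 + y0 + z0 - X t - Y t.
Proof. by rewrite /Zsol Ysol_prod /Xsol invfM; ring. Qed.

Lemma gden_factor t : t0 <= t ->
  gden t0 b c x0 y0 t = (x0 * P t + y0) * cmb b c t / x0.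
Proof. by move=> le_t0t; rewrite /gden iprod_recr // /kappa; field. Qed.

Lemma xP_neq0 t : t0 <= t -> x0 * P t + y0 != 0.
Proof.
by move=> le_t0t; have := gden_neq0 t; rewrite gden_factor // !mulf_eq0 !negb_or => /andP[/andP[]].
Qed.

Lemma Xsol_Ysol_neq0 t : t0 <= t -> X t + Y t != 0.
Proof.
move=> le_t0t; have -> : X t + Y t = (x0 * P t + y0) / (P t * G t).
  by rewrite /Xsol Ysol_prod; field; rewrite !iprod_neq0.
by rewrite mulf_neq0 ?xP_neq0 // invr_eq0 mulf_neq0 ?iprod_neq0.
Qed.

Lemma g_gain t : t0 <= t -> g t0 b c x0 y0 t = sir_gain (b t) (c t) (X t) (Y t).
Proof.
move=> le_t0t; rewrite /g gden_factor // /sir_gain /Xsol Ysol_prod /kappa -/(cmb b c t).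
by field; rewrite !iprod_neq0 ?cmb_neq0 ?xP_neq0.
Qed.

Lemma sir_den_neq0 t : t0 <= t -> sir_den (b t) (c t) (X t) (Y t) != 0.
Proof.
move=> le_t0t; rewrite (sir_denE (Xsol_Ysol_neq0 le_t0t) (cmb_neq0 t)) -g_gain //.
exact: mulf_neq0 (cmb_neq0 t) (onepg_neq0 t).
Qed.

Lemma Xsol_succ t : t0 <= t -> X (t + 1) = X t / onepg t0 b c x0 y0 t.
Proof. by move=> le_t0t; rewrite /Xsol addrK iprod_recr // invfM mulrA. Qed.

Lemma Ysol_succ t : t0 <= t -> Y (t + 1) = Y t / sir_den (b t) (c t) (X t) (Y t).
Proof.
move=> le_t0t; rewrite (sir_denE (Xsol_Ysol_neq0 le_t0t) (cmb_neq0 t)) -g_gain //.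
by rewrite /Ysol addrK iprod_recr // invfM mulrA.
Qed.

Lemma closed_form_solves : is_solution t0 b c x0 y0 z0 X Y Z.
Proof.
have X_t0 : X t0 = x0 by rewrite /Xsol iprod_pred_id invr1 mulr1.
have Y_t0 : Y t0 = y0 by rewrite /Ysol iprod_pred_id invr1 mulr1.
split=> // [|t le_t0t]; first by rewrite Zsol_conservation X_t0 Y_t0; ring.
have xy_neq0 := Xsol_Ysol_neq0 le_t0t.
have eq_X : X (t + 1) = X t - b t * X t * Y (t + 1) / (X t + Y t).
  rewrite Ysol_succ // sir_x_step ?cmb_neq0 -?g_gain ?onepg_neq0 //.
  exact: Xsol_succ.
have eq_Y : Y (t + 1) = Y t + b t * X t * Y (t + 1) / (X t + Y t) - c t * Y (t + 1).
  by apply/sir_y_eqE; [exact: sir_den_neq0 | exact: Ysol_succ].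
split=> //; rewrite !Zsol_conservation -[_ - X (t + 1) - _]addrA -opprD.
by rewrite (sir_sum_step eq_X eq_Y); ring.
Qed.

Lemma closed_form_unique x y z : is_solution t0 b c x0 y0 z0 x y z ->
  forall t, t0 <= t -> [/\ x t = X t, y t = Y t & z t = Z t].
Proof.
case=> x_t0 y_t0 z_t0 step; have [X_t0 Y_t0 Z_t0 closed_step] := closed_form_solves.
apply: int_ind_ge => [|t le_t0t [x_t y_t z_t]].
  by rewrite x_t0 y_t0 z_t0 X_t0 Y_t0 Z_t0.
have [eq_x eq_y eq_z] := step t le_t0t; have [eq_X _ eq_Z] := closed_step t le_t0t.
have y_succ : y (t + 1) = Y (t + 1).
  move: eq_y; rewrite x_t y_t sir_y_eqE ?sir_den_neq0 // => ->.
  by rewrite Ysol_succ.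
by split=> //; [rewrite eq_x x_t y_t y_succ | rewrite eq_z z_t y_succ].
Qed.

End ClosedForm.

Theorem theorem16 (R : realFieldType) (t0 : int) (b c : int -> R) (x0 y0 z0 : R) :
  (forall t, 0 <= b t) -> (forall t, 0 <= c t) ->
  0 < x0 -> 0 < y0 -> 0 <= z0 ->
  (forall t, 1 + c t - b t != 0) ->
  (forall t, gden t0 b c x0 y0 t != 0) ->
  (forall t, 1 + g t0 b c x0 y0 t != 0) ->
  is_solution t0 b c x0 y0 z0
    (Xsol t0 b c x0 y0) (Ysol t0 b c x0 y0) (Zsol t0 b c x0 y0 z0) /\
  (forall x y z : int -> R, is_solution t0 b c x0 y0 z0 x y z ->
     forall t, t0 <= t ->
       [/\ x t = Xsol t0 b c x0 y0 t, y t = Ysol t0 b c x0 y0 t &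
           z t = Zsol t0 b c x0 y0 z0 t]).
Proof.
move=> _ _ /lt0r_neq0 x0_neq0 _ _ cb_neq0 gden_neq0 onepg_neq0.
have cmb_neq0 t : cmb b c t != 0 by rewrite /cmb addrA.
by split; [apply: closed_form_solves | apply: closed_form_unique].
Qed.
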